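(* Let $t\geq 1$ and let $M$ be a Sidon set in $\mathbb{F}_2^t$ with $|M| > s_{\max}(t-1)$. Then (a) $\{m_1+m_2+m_3+m_4 : m_1,m_2,m_3,m_4\in M\} = \mathbb{F}_2^t$; and (b) $\dim \langle M\rangle = \dim \langle \{m_1+m_2 : m_1,m_2\in M,\ m_1\neq m_2\}\rangle = t$, where $\langle\cdot\rangle$ denotes linear span.
   Context: $\mathbb{F}_2^t$ is the $t$-dimensional vector space over $\mathbb{F}_2$. A subset $M\subseteq \mathbb{F}_2^t$ is Sidon if $m_1+m_2\neq m_3+m_4$ for all pairwise distinct $m_1,m_2,m_3,m_4\in M$. $s_{\max}(t)$ denotes the maximum size of a Sidon set in $\mathbb{F}_2^t$ (with $s_{\max}(0)=1$). In (a) the $m_i$ need not be distinct. *)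

From HB Require Import structures.
From mathcomp Require Import all_boot all_order all_algebra all_field.
Set Implicit Arguments. Unset Strict Implicit. Unset Printing Implicit Defensive.
Import GRing.Theory.
Local Open Scope ring_scope.

Notation F2t t := 'rV['F_2]_t.

Definition sidon (t : nat) (M : {set F2t t}) : bool :=
  [forall m1 in M, forall m2 in M, forall m3 in M, forall m4 in M,
     [&& m1 != m2, m1 != m3, m1 != m4, m2 != m3, m2 != m4 & m3 != m4] ==>
     (m1 + m2 != m3 + m4)].

(* maximum size of a Sidon set in F_2^t (for t = 0 this is 1, as F_2^0 has
   a single element). *)
Definition s_max (t : nat) : nat :=
  \max_(A : {set F2t t} | sidon A) #|A|.

Definition sumset2 (t : nat) (M : {set F2t t}) : {set F2t t} :=
  [set m1 + m2 | m1 in M, m2 in M & m1 != m2].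

(* If some x is not a sum of four elements of M, then x <> 0 and the only
   element of M + M + M + M on the line {0, x} is 0.  The projection of F_2^t
   onto F_2^(t-1) along x is therefore injective on M and maps it to a Sidon
   set, so |M| <= s_max (t - 1).  Hence M + M + M + M = F_2^t, and since
   m1 + m2 + m3 + m4 = (m1 + m2) + (m3 + m4), the pairwise sums already span
   F_2^t. *)

From mathcomp Require Import all_boot all_order all_algebra all_field.
Set Implicit Arguments.
Unset Strict Implicit.
Unset Printing Implicit Defensive.
Import GRing.Theory.

Local Open Scope ring_scope.

Lemma F2_cases (a : 'F_2) : a = 0 \/ a = 1.
Proof. by case: a => [[|[|k]] lt_k2]; [left; apply/eqP|right; apply/eqP|]. Qed.

Lemma addvv_F2 (V : lmodType 'F_2) (v : V) : v + v = 0.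
Proof. by rewrite -mulr2n -scaler_nat (pcharf0 (pchar_Fp _)) ?scale0r. Qed.

Lemma oppv_F2 (V : lmodType 'F_2) (v : V) : - v = v.
Proof. by apply/esym/eqP; rewrite -addr_eq0 addvv_F2. Qed.

Lemma row_neq0P (F : fieldType) n (x : 'rV[F]_n) :
  reflect (exists i, x 0 i != 0) (x != 0).
Proof.
apply: (iffP idP) => [x_nz | [i]]; last by apply: contraNneq => ->; rewrite mxE.
apply/existsP; apply: contraNT x_nz => /existsPn x0.
by apply/eqP/rowP => i; rewrite mxE; apply/eqP/negbNE.
Qed.

Lemma dim_rV_fullv (F : fieldType) n (U : {vspace 'rV[F]_n}) :
  (fullv <= U)%VS -> \dim U = n.
Proof.
move=> fullU; have ->: U = fullv by apply/eqP; rewrite eqEsubv subvf.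
by rewrite dimvf dim_matrix mul1r.
Qed.

Section ProjectionAlong.

Variables (F : fieldType) (n : nat) (x : 'rV[F]_n.+1) (i : 'I_n.+1).

Definition proj_along (v : 'rV[F]_n.+1) : 'rV[F]_n :=
  col' i (v - (v 0 i / x 0 i) *: x).

Lemma proj_alongD : {morph proj_along : u v / u + v}.
Proof. by move=> u v; apply/rowP => j; rewrite !mxE !mulrDl opprD addrACA. Qed.

Lemma proj_along_eq0 v :
  x 0 i != 0 -> proj_along v = 0 -> v = (v 0 i / x 0 i) *: x.
Proof.
move=> x_i_nz /rowP proj_v0; apply/rowP => k; rewrite mxE.
case: (unliftP i k) => [j -> | ->]; last by rewrite divfK.
by apply/eqP; rewrite -subr_eq0; move: (proj_v0 j); rewrite !mxE => ->.
Qed.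

End ProjectionAlong.

Lemma proj_along_eq0_F2 n (x v : F2t n.+1) i :
  x 0 i != 0 -> proj_along x i v = 0 -> v = 0 \/ v = x.
Proof.
move=> x_i_nz /(proj_along_eq0 x_i_nz) ->.
case: (F2_cases (v 0 i / x 0 i)) => ->; first by left; rewrite scale0r.
by right; rewrite scale1r.
Qed.

Lemma sidonP t (M : {set F2t t}) :
  reflect (forall m1 m2 m3 m4, m1 \in M -> m2 \in M -> m3 \in M -> m4 \in M ->
             [&& m1 != m2, m1 != m3, m1 != m4, m2 != m3, m2 != m4 & m3 != m4] ->
             m1 + m2 != m3 + m4)
          (sidon M).
Proof.
apply: (iffP forall_inP) => [sM m1 m2 m3 m4 M1 M2 M3 M4 | sM m1 M1].
  move/forall_inP: (sM m1 M1) => /(_ m2 M2)/forall_inP/(_ m3 M3).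
  by move/forall_inP/(_ m4 M4)/implyP.
apply/forall_inP => m2 M2; apply/forall_inP => m3 M3; apply/forall_inP => m4 M4.
by apply/implyP; apply: sM.
Qed.

Lemma card_le_s_max t (A : {set F2t t}) : sidon A -> (#|A| <= s_max t)%N.
Proof. exact: leq_bigmax_cond. Qed.

Section SidonImage.

Variables (m n : nat) (f : F2t m -> F2t n) (M : {set F2t m}).
Hypothesis fD : {morph f : u v / u + v}.
Hypothesis f_ker_sum4 : forall a b c d, a \in M -> b \in M -> c \in M -> d \in M ->
  f (a + b + c + d) = 0 -> a + b + c + d = 0.

Lemma inj_sum4_ker : {in M &, injective f}.
Proof.
move=> a b Ma Mb fab; apply/eqP; rewrite -[b]oppv_F2 -addr_eq0.
have := f_ker_sum4 Ma Mb Mb Mb; rewrite -addrA addvv_F2 addr0 => -> //.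
by rewrite fD fab addvv_F2.
Qed.

Lemma sidon_imset : sidon M -> sidon (f @: M).
Proof.
move=> /sidonP sM; apply/sidonP => _ _ _ _ /imsetP[a Ma ->] /imsetP[b Mb ->]
  /imsetP[c Mc ->] /imsetP[d Md ->] /and5P[fab fac fad fbc /andP[fbd fcd]].
have neq_f u v : f u != f v -> u != v by apply: contra_neq => ->.
have distinct : [&& a != b, a != c, a != d, b != c, b != d & c != d] by rewrite !neq_f.
apply: contra (sM a b c d Ma Mb Mc Md distinct) => /eqP fab_cd.
have /eqP : a + b + (c + d) = 0.
  rewrite addrA; apply: f_ker_sum4 => //.
  by rewrite !fD fab_cd -addrA addvv_F2.
by rewrite addr_eq0 oppv_F2.
Qed.

End SidonImage.

Lemma nonsum4_card_le_s_max n (M : {set F2t n.+1}) (x : F2t n.+1) :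
  sidon M -> x != 0 ->
  (forall a b c d, a \in M -> b \in M -> c \in M -> d \in M -> a + b + c + d != x) ->
  (#|M| <= s_max n)%N.
Proof.
move=> sM /row_neq0P[i x_i_nz] x_nonsum4.
have projD := @proj_alongD _ _ x i.
have proj_ker_sum4 a b c d : a \in M -> b \in M -> c \in M -> d \in M ->
    proj_along x i (a + b + c + d) = 0 -> a + b + c + d = 0.
  move=> Ma Mb Mc Md /(proj_along_eq0_F2 x_i_nz) [// | sum_x].
  by move: (x_nonsum4 a b c d Ma Mb Mc Md); rewrite sum_x eqxx.
rewrite -(card_in_imset (inj_sum4_ker projD proj_ker_sum4)).
exact/card_le_s_max/(sidon_imset projD proj_ker_sum4).
Qed.

Lemma sidon_sum4_covers n (M : {set F2t n.+1}) :
  sidon M -> (s_max n < #|M|)%N ->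
  forall x : F2t n.+1, exists m1 m2 m3 m4,
    [/\ m1 \in M, m2 \in M, m3 \in M & m4 \in M] /\ x = m1 + m2 + m3 + m4.
Proof.
move=> sM cardM x.
have [m Mm] : exists m, m \in M by apply/card_gt0P; apply: leq_ltn_trans cardM.
have [-> | x_nz] := eqVneq x 0.
  by exists m, m, m, m; rewrite -addrA !addvv_F2.
have [sum4 | nonsum4] := boolP [exists m1 in M, exists m2 in M, exists m3 in M,
                                exists m4 in M, m1 + m2 + m3 + m4 == x].
  case/exists_inP: sum4 => m1 M1 /exists_inP[m2 M2 /exists_inP[m3 M3]].
  by case/exists_inP => m4 M4 /eqP <-; exists m1, m2, m3, m4.
suff: (#|M| <= s_max n)%N by rewrite leqNgt cardM.
apply: (nonsum4_card_le_s_max sM x_nz) => m1 m2 m3 m4 M1 M2 M3 M4.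
apply: contra nonsum4 => sum_x; apply/exists_inP; exists m1 => //.
apply/exists_inP; exists m2 => //; apply/exists_inP; exists m3 => //.
by apply/exists_inP; exists m4.
Qed.

Lemma addv_mem_span_sumset2 t (M : {set F2t t}) a b :
  a \in M -> b \in M -> a + b \in <<enum (sumset2 M)>>%VS.
Proof.
move=> Ma Mb; have [<- | ab] := eqVneq a b; first by rewrite addvv_F2 mem0v.
by apply: memv_span; rewrite mem_enum; apply/imset2P; exists a b; rewrite // inE Mb.
Qed.

Lemma span_sumset2_sub t (M : {set F2t t}) :
  (<<enum (sumset2 M)>> <= <<enum M>>)%VS.
Proof.
apply/span_subvP => y; rewrite mem_enum => /imset2P[a b Ma].
rewrite inE => /andP[Mb _] ->.
by rewrite memvD // memv_span // mem_enum.
Qed.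

Theorem theorem1p11 (t : nat) (M : {set 'rV['F_2]_t}) :
  (1 <= t)%N -> sidon M -> (s_max t.-1 < #|M|)%N ->
  (forall x : 'rV['F_2]_t, exists m1 m2 m3 m4,
      [/\ m1 \in M, m2 \in M, m3 \in M & m4 \in M] /\ x = m1 + m2 + m3 + m4)
  /\ \dim <<enum M>>%VS = t /\ \dim <<enum (sumset2 M)>>%VS = t.
Proof.
case: t M => [// | n] M _ sM cardM.
have sum4 := sidon_sum4_covers sM cardM.
have full_sumset2 : (fullv <= <<enum (sumset2 M)>>)%VS.
  apply/subvP => x _; have [a [b [c [d [[Ma Mb Mc Md] ->]]]]] := sum4 x.
  by rewrite -addrA memvD ?addv_mem_span_sumset2.
split=> //; split; apply: dim_rV_fullv => //.
exact: subv_trans full_sumset2 (span_sumset2_sub M).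
Qed.
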